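(* Let $T$ be a complete theory with monster model $\mathcal{U}$, $A\subseteq\mathcal{U}$ small, $\mu\in\mathfrak{M}_x(\mathcal{U})$, $\nu\in\mathfrak{M}_y(\mathcal{U})$, and suppose $\lambda\in\mathfrak{M}_{xy}(A)$ witnesses $\mu\geq_{\mathbb{E},A}\nu$. Then for every $\psi(y)\in\mathcal{L}_y(\mathcal{U})$ and $\epsilon>0$ there exist $\chi^-_\epsilon(x,y),\chi^+_\epsilon(x,y)\in\mathbb{B}_{xy}(A)$ such that (1) $\chi^-_\epsilon(x,y)\subseteq(\psi(y)\wedge x=x)\subseteq\chi^+_\epsilon(x,y)$; (2) for every $\omega\in\operatorname{E}(\lambda,\mu)$, $\omega(\chi^+_\epsilon(x,y))-\omega(\chi^-_\epsilon(x,y))<\epsilon$; (3) for every $\omega\in\operatorname{E}(\lambda,\mu)$, $|\omega(\chi^{\dagger}_\epsilon(x,y))-\nu(\psi(y))|<\epsilon$ for $\dagger\in\{+,-\}$.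
   Context: For $B\subseteq\mathcal{U}$, $\mathcal{L}_x(B)$ is the Boolean algebra of formulas in $x$ with parameters from $B$ modulo $T$, identified with $B$-definable sets, and embedded in $\mathcal{L}_{xy}(B)$ via $\varphi(x)\mapsto\varphi(x)\wedge y=y$; $\mathfrak{M}_x(B)$ is the set of finitely additive probability measures on $\mathcal{L}_x(B)$. For $\omega\in\mathfrak{M}_{xy}(B)$, $\pi_x(\omega)(\varphi(x))=\omega(\varphi(x)\wedge y=y)$ (similarly $\pi_y$); $\omega|_C$ is restriction. $\operatorname{E}(\lambda,\mu)=\{\omega\in\mathfrak{M}_{xy}(\mathcal{U}):\omega|_A=\lambda,\pi_x(\omega)=\mu\}$. $\lambda$ witnesses $\mu\geq_{\mathbb{E},A}\nu$ means $\pi_x(\lambda)=\mu|_A$ and $\pi_y(\omega)=\nu$ for all $\omega\in\operatorname{E}(\lambda,\mu)$. $\mathbb{B}_{xy}(A)$ is the Boolean subalgebra of $\mathcal{L}_{xy}(\mathcal{U})$ generated by $\{\varphi(x)\wedge y=y:\varphi(x)\in\mathcal{L}_x(\mathcal{U})\}\cup\mathcal{L}_{xy}(A)$. *)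

From Stdlib Require Lists.List.
From mathcomp Require Import all_boot all_order all_algebra.
From mathcomp Require Import boolp classical_sets cardinality reals.

Import Order.TTheory GRing.Theory Num.Theory.
Local Open Scope classical_set_scope.
Local Open Scope ring_scope.

(** * First-order syntax over a signature (function symbols [F], relation
    symbols [Rl]; a symbol is interpreted on the list of its arguments),
    with parameters (constants) taken from a type [P]. *)
Section Syntax.
Variables (F Rl P : Type).

Inductive term : Type :=
| tvar of nat
| tpar of P
| tapp of F & seq term.

Inductive formula : Type :=
| fatom of Rl & seq term
| feq of term & term
| fneg of formula
| fand of formula & formula
| fex of nat & formula.

Fixpoint term_params_in (B : set P) (t : term) : Prop :=
  match t with
  | tvar _ => True
  | tpar p => B p
  | tapp _ ts => foldr (fun t acc => term_params_in B t /\ acc) True ts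
  end.

Fixpoint params_in (B : set P) (phi : formula) : Prop :=
  match phi with
  | fatom _ ts => foldr (fun t acc => term_params_in B t /\ acc) True ts
  | feq t1 t2 => term_params_in B t1 /\ term_params_in B t2
  | fneg f => params_in B f
  | fand f g => params_in B f /\ params_in B g
  | fex _ f => params_in B f
  end.
End Syntax.

Arguments tvar {F P}. Arguments tpar {F P}. Arguments tapp {F P}.
Arguments fatom {F Rl P}. Arguments feq {F Rl P}. Arguments fneg {F Rl P}.
Arguments fand {F Rl P}. Arguments fex {F Rl P}.

Section Semantics.
Variables (F Rl U : Type) (funI : F -> seq U -> U) (relI : Rl -> seq U -> Prop).

Fixpoint teval (v : nat -> U) (t : term F U) : U :=
  match t with
  | tvar k => v k
  | tpar u => u
  | tapp f ts => funI f (map (teval v) ts)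
  end.

Definition upd (v : nat -> U) (k : nat) (u : U) : nat -> U :=
  fun j => if j == k then u else v j.

Fixpoint sat (v : nat -> U) (phi : formula F Rl U) : Prop :=
  match phi with
  | fatom r ts => relI r (map (teval v) ts)
  | feq t1 t2 => teval v t1 = teval v t2
  | fneg f => ~ sat v f
  | fand f g => sat v f /\ sat v g
  | fex k f => exists u, sat (upd v k u) f
  end.

(** [B]-definable subsets of [U^n] (tuples of variables [x = (x_0,...,x_{n-1})]),
    i.e. the elements of [L_x(B)] (formulas modulo [T = Th(U)], identified with
    the sets they define). *)
Definition definable (n : nat) (B : set U) (S : set ('I_n -> U)) : Prop :=
  exists phi : formula F Rl U, params_in F Rl U B phi /\
    forall a : 'I_n -> U,
      S a <-> (forall v : nat -> U, (forall i : 'I_n, v i = a i) -> sat v phi).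

Definition card_lt_type {T : Type} (B : set T) (K : Type) : Prop :=
  ~ (card_le [set: K] B).

(** [U] is a monster model for the cardinal represented by [K]:
    nonempty, [K]-saturated, strongly [K]-homogeneous, [K] bigger than the
    language and than [aleph_0]. *)
Definition saturated (K : Type) : Prop :=
  forall (B : set U) (p : set (formula F Rl U)),
    card_lt_type B K ->
    (forall phi, p phi -> params_in F Rl U B phi) ->
    (forall s : seq (formula F Rl U), (forall phi, Stdlib.Lists.List.In phi s -> p phi) ->
       exists u : U, forall phi, Stdlib.Lists.List.In phi s ->
         forall v : nat -> U, v 0%N = u -> sat v phi) ->
    exists u : U, forall phi, p phi -> forall v : nat -> U, v 0%N = u -> sat v phi.

Definition automorphism (s : U -> U) : Prop :=
  bijective s /\
  (forall f l, s (funI f l) = funI f (map s l)) /\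
  (forall r l, relI r l <-> relI r (map s l)).

Definition elementary_on (B : set U) (f : U -> U) : Prop :=
  forall (phi : formula F Rl U) (v : nat -> U),
    params_in F Rl U set0 phi -> (forall k, B (v k)) ->
    (sat v phi <-> sat (f \o v) phi).

Definition strongly_homogeneous (K : Type) : Prop :=
  forall (B : set U) (f : U -> U), card_lt_type B K -> elementary_on B f ->
    exists s, automorphism s /\ forall b, B b -> s b = f b.

Definition monster (K : Type) : Prop :=
  inhabited U /\ saturated K /\ strongly_homogeneous K /\
  card_lt_type [set: F + Rl] K /\ card_lt_type [set: nat] K.

(** cylinders: [phi(x) /\ y = y] and [psi(y) /\ x = x] in variables [xy] *)
Definition cylx (n m : nat) (S : set ('I_n -> U)) : set ('I_(n + m) -> U) :=
  fun c => S (fun i => c (lshift m i)).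
Definition cyly (n m : nat) (S : set ('I_m -> U)) : set ('I_(n + m) -> U) :=
  fun c => S (fun j => c (rshift n j)).

Variable R : realType.

(** finitely additive probability measures on [L_x(B)] ([mu] is only
    meaningful on [B]-definable sets). *)
Definition keisler (n : nat) (B : set U) (mu : set ('I_n -> U) -> R) : Prop :=
  mu setT = 1 /\
  (forall D, definable n B D -> 0 <= mu D) /\
  (forall D1 D2, definable n B D1 -> definable n B D2 -> D1 `&` D2 = set0 ->
     mu (D1 `|` D2) = mu D1 + mu D2).

Definition Eset (n m : nat) (A : set U) (lam : set ('I_(n + m) -> U) -> R)
  (mu : set ('I_n -> U) -> R) (om : set ('I_(n + m) -> U) -> R) : Prop :=
  keisler (n + m) setT om /\
  (forall D, definable (n + m) A D -> om D = lam D) /\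
  (forall D, definable n setT D -> om (cylx n m D) = mu D).

Definition witnesses (n m : nat) (A : set U) (lam : set ('I_(n + m) -> U) -> R)
  (mu : set ('I_n -> U) -> R) (nu : set ('I_m -> U) -> R) : Prop :=
  (forall D, definable n A D -> lam (cylx n m D) = mu D) /\
  (forall om, Eset n m A lam mu om ->
     forall D, definable m setT D -> om (cyly n m D) = nu D).

Inductive Bxy (n m : nat) (A : set U) : set ('I_(n + m) -> U) -> Prop :=
| Bxy_cyl D : definable n setT D -> Bxy n m A (cylx n m D)
| Bxy_A D : definable (n + m) A D -> Bxy n m A D
| Bxy_compl D : Bxy n m A D -> Bxy n m A (~` D)
| Bxy_and D1 D2 : Bxy n m A D1 -> Bxy n m A D2 -> Bxy n m A (D1 `&` D2).

End Semantics.

Arguments definable {F Rl U} funI relI n B S.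
Arguments monster {F Rl U} funI relI K.
Arguments keisler {F Rl U} funI relI {R} n B mu.
Arguments Eset {F Rl U} funI relI {R} n m A lam mu om.
Arguments witnesses {F Rl U} funI relI {R} n m A lam mu nu.
Arguments Bxy {F Rl U} funI relI n m A _.
Arguments cyly {U} n m S _.
Arguments cylx {U} n m S _.

(* Fix om in E(lam, mu) and let C be the cylinder of psi. Membership in
   E(lam, mu) only constrains values on B_xy(A), so every finitely additive
   extension of the restriction of om to B_xy(A) lies in E(lam, mu) again and
   therefore gives C the measure nu(psi). By the Łoś–Marczewski construction
   such an extension can take at C the inner measure of C relative to om on
   B_xy(A), and likewise at the complement of C; hence the inner and the outer
   B_xy(A)-measure of C both equal nu(psi), which gives, for each om, sets
   chi- <= C <= chi+ in B_xy(A) of om-width < eps. As E(lam, mu) is closed in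
   the product topology, a compact cube of values contains (after truncation
   outside the definable sets) all its members, so finitely many such pairs
   serve every om; their union and intersection are the required chi- and
   chi+. *)

From HB Require Import structures.
From mathcomp Require Import all_boot all_order all_algebra.
From mathcomp Require Import boolp classical_sets cardinality reals.
From mathcomp Require Import finmap lra topology normedtype.
Import numFieldNormedType.Exports.
Import Order.TTheory GRing.Theory Num.Theory.
Local Open Scope classical_set_scope.
Local Open Scope ring_scope.
Set Implicit Arguments.
Unset Strict Implicit.

Section SetAlgebra.
Variable T : Type.

Definition set_algebra (G : set (set T)) :=
  [/\ G setT, forall X, G X -> G (~` X) & setI_closed G].

Variable G : set (set T).
Hypothesis hG : set_algebra G.

Lemma set_algebraT : G setT. Proof. by case: hG. Qed.
Lemma set_algebraC X : G X -> G (~` X). Proof. by case: hG => _ + _; apply. Qed.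
Lemma set_algebraI X Y : G X -> G Y -> G (X `&` Y). Proof. by case: hG => _ _; apply. Qed.

Lemma set_algebra0 : G set0.
Proof. by rewrite -setCT; apply/set_algebraC/set_algebraT. Qed.

Lemma set_algebraU X Y : G X -> G Y -> G (X `|` Y).
Proof.
by move=> GX GY; rewrite -[_ `|` _]setCK setCU; apply/set_algebraC/set_algebraI;
  apply: set_algebraC.
Qed.

Lemma set_algebraD X Y : G X -> G Y -> G (X `\` Y).
Proof. by move=> GX GY; apply/set_algebraI/set_algebraC. Qed.

Lemma set_algebra_bigcup (I : choiceType) (s : seq I) (F : I -> set T) :
  (forall i, i \in s -> G (F i)) -> G (\bigcup_(i in [set` s]) F i).
Proof.
move=> GF; rewrite bigcup_seq big_seq.
by apply: big_ind => //; [exact: set_algebra0 | exact: set_algebraU].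
Qed.

Lemma set_algebra_bigcap (I : choiceType) (s : seq I) (F : I -> set T) :
  (forall i, i \in s -> G (F i)) -> G (\bigcap_(i in [set` s]) F i).
Proof.
move=> GF; rewrite bigcap_seq big_seq.
by apply: big_ind => //; [exact: set_algebraT | exact: set_algebraI].
Qed.

End SetAlgebra.

Section FiniteAdditivity.
Variables (T : Type) (R : realType).

Definition fa_prob (D : set (set T)) (w : set T -> R) :=
  [/\ w setT = 1, forall X, D X -> 0 <= w X &
      forall X Y, D X -> D Y -> X `&` Y = set0 -> w (X `|` Y) = w X + w Y].

Lemma fa_probS (D1 D2 : set (set T)) w : D1 `<=` D2 -> fa_prob D2 w -> fa_prob D1 w.
Proof. by move=> sD [w1 w0 wD]; split=> // [X /sD|X Y /sD DX /sD]; [exact: w0|exact: wD]. Qed.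

Variables (D : set (set T)) (w : set T -> R).
Hypotheses (hD : set_algebra D) (hw : fa_prob D w).

Lemma fa_probT : w setT = 1. Proof. by case: hw. Qed.
Lemma fa_prob_ge0 X : D X -> 0 <= w X. Proof. by case: hw => _ + _; apply. Qed.
Lemma fa_probU X Y : D X -> D Y -> X `&` Y = set0 -> w (X `|` Y) = w X + w Y.
Proof. by case: hw => _ _; apply. Qed.

Lemma fa_probD X Y : D X -> D Y -> X `<=` Y -> w (Y `\` X) = w Y - w X.
Proof.
move=> DX DY XY; apply/eqP; rewrite eq_sym subr_eq addrC -fa_probU //.
- by rewrite setDUK.
- exact: set_algebraD.
- by rewrite setDE setICA setICr setI0.
Qed.

Lemma fa_prob_le X Y : D X -> D Y -> X `<=` Y -> w X <= w Y.
Proof.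
move=> DX DY XY; rewrite -subr_ge0 -fa_probD //.
by apply: fa_prob_ge0; exact: set_algebraD.
Qed.

Lemma fa_probC X : D X -> w (~` X) = 1 - w X.
Proof. by move=> DX; rewrite -setTD fa_probD ?fa_probT //; exact: set_algebraT. Qed.

Lemma fa_prob0 : w set0 = 0.
Proof. by rewrite -setCT fa_probC ?fa_probT ?subrr //; exact: set_algebraT. Qed.

Lemma fa_prob_le1 X : D X -> w X <= 1.
Proof. by move=> DX; rewrite -fa_probT fa_prob_le //; exact: set_algebraT. Qed.

Lemma eq_fa_prob w' : (forall X, D X -> w' X = w X) -> fa_prob D w'.
Proof.
move=> w'w; split=> [|X DX|X Y DX DY XY].
- by rewrite w'w ?fa_probT //; exact: (set_algebraT hD).
- by rewrite w'w //; exact: fa_prob_ge0.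
- by rewrite !w'w ?fa_probU //; exact: (set_algebraU hD).
Qed.

End FiniteAdditivity.

Section InnerMeasure.
Variables (T : Type) (R : realType) (D : set (set T)) (w : set T -> R).
Hypotheses (hD : set_algebra D) (hw : fa_prob D w).

Definition inner_measure (Z : set T) : R :=
  sup [set w X | X in [set X | D X /\ X `<=` Z]].

Local Notation inner := inner_measure.

Lemma inner_has_sup Z : has_sup [set w X | X in [set X | D X /\ X `<=` Z]].
Proof.
split; first by exists (w set0), set0 => //; split; [exact: (set_algebra0 hD)|].
by exists 1 => y [X [DX _] <-]; exact: (fa_prob_le1 hD hw).
Qed.

Lemma inner_ub X Z : D X -> X `<=` Z -> w X <= inner Z.
Proof. by move=> DX XZ; apply: sup_upper_bound (inner_has_sup Z) _ _; exists X. Qed.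

Lemma inner_le Z s : (forall X, D X -> X `<=` Z -> w X <= s) -> inner Z <= s.
Proof.
move=> ub; apply: ge_sup; first by case: (inner_has_sup Z).
by move=> y [X [DX XZ] <-]; exact: ub.
Qed.

Lemma inner_approx Z d : 0 < d -> exists2 X, D X /\ X `<=` Z & inner Z - d < w X.
Proof.
by move=> d_gt0; have [_ [X DX <-] lt] := sup_adherent d_gt0 (inner_has_sup Z); exists X.
Qed.

Lemma inner_ge0 Z : 0 <= inner Z.
Proof. by rewrite -(fa_prob0 hD hw); apply: inner_ub => //; exact: (set_algebra0 hD). Qed.

Lemma inner_le_fa Y Z : D Y -> Z `<=` Y -> inner Z <= w Y.
Proof.
move=> DY ZY; apply: inner_le => X DX XZ.
by apply: (fa_prob_le hD hw) => //; exact: subset_trans ZY.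
Qed.

Lemma inner_fa Z : D Z -> inner Z = w Z.
Proof. by move=> DZ; apply/eqP; rewrite eq_le inner_le_fa //= inner_ub. Qed.

Lemma inner_add X1 X2 C : D X1 -> D X2 -> X1 `&` X2 = set0 ->
  inner ((X1 `|` X2) `&` C) = inner (X1 `&` C) + inner (X2 `&` C).
Proof.
move=> DX1 DX2 X12; apply/eqP; rewrite eq_le; apply/andP; split.
  apply: inner_le => W DW sW.
  have WX : W = (W `&` X1) `|` (W `&` X2) by rewrite -setIUr setIidl // => z /sW [].
  rewrite WX (fa_probU hw) //; last 3 first.
  - exact: (set_algebraI hD).
  - exact: (set_algebraI hD).
  - by rewrite -subset0 -X12 => z [[_ ?] [_ ?]].
  by apply: lerD; apply: inner_ub; try exact: (set_algebraI hD); move=> z [/sW [_ ?] ?].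
rewrite -lerBrDr; apply: inner_le => W1 DW1 sW1; rewrite lerBrDr addrC -lerBrDr.
apply: inner_le => W2 DW2 sW2; rewrite lerBrDr -(fa_probU hw) //; last first.
  by rewrite -subset0 -X12 => z [/sW2 [? _] /sW1 [? _]].
apply: inner_ub; first exact: (set_algebraU hD).
by move=> z [/sW2 [? ?]|/sW1 [? ?]]; split => //; [right|left].
Qed.

Lemma inner_setCD Y C : D Y -> inner (~` (Y `\` C)) = 1 - w Y + inner (Y `&` C).
Proof.
move=> DY; have DCY := set_algebraC hD DY.
have -> : ~` (Y `\` C) = (~` Y `|` Y) `&` (~` Y `|` C).
  by rewrite setDE setCI setCK setvU setTI.
rewrite inner_add //; last by rewrite setIC setICr.
rewrite [~` Y `&` _]setIC setUK setIUr setICr set0U.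
by rewrite inner_fa ?(fa_probC hD hw).
Qed.

End InnerMeasure.

Definition adjoin (T : Type) (D : set (set T)) (C : set T) : set (set T) :=
  [set Z | exists X Y, [/\ D X, D Y & Z = (X `&` C) `|` (Y `\` C)]].

Lemma adjoin_subset (T : Type) (Aa D : set (set T)) (C : set T) :
  set_algebra Aa -> D `<=` Aa -> Aa C -> adjoin D C `<=` Aa.
Proof.
move=> hAa DAa AaC _ [X [Y [/DAa AaX /DAa AaY ->]]].
by apply: (set_algebraU hAa); [exact: (set_algebraI hAa) | exact: (set_algebraD hAa)].
Qed.

Section Adjoin.
Variables (T : Type) (R : realType) (D : set (set T)) (w : set T -> R) (C : set T).
Hypotheses (hD : set_algebra D) (hw : fa_prob D w).

Local Notation inner := (inner_measure D w).

Lemma adjoin_sub : D `<=` adjoin D C.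
Proof. by move=> Z DZ; exists Z, Z; rewrite setUIDK. Qed.

Lemma adjoinC : adjoin D C C.
Proof.
exists setT, set0; split; [exact: (set_algebraT hD) | exact: (set_algebra0 hD) |].
by rewrite setTI set0D setU0.
Qed.

Lemma adjoin_algebra : set_algebra (adjoin D C).
Proof.
split; first exact/adjoin_sub/(set_algebraT hD).
  move=> _ [X [Y [DX DY ->]]]; exists (~` X), (~` Y).
  split; [exact: (set_algebraC hD) | exact: (set_algebraC hD) |].
  by apply/seteqP; split=> z; case: (EM (C z)); rewrite /setC /setI /setU /setD /=; tauto.
move=> _ _ [X1 [Y1 [DX1 DY1 ->]]] [X2 [Y2 [DX2 DY2 ->]]].
exists (X1 `&` X2), (Y1 `&` Y2); split; [exact: (set_algebraI hD) | exact: (set_algebraI hD) |].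
by apply/seteqP; split=> z; case: (EM (C z)); rewrite /setC /setI /setU /setD /=; tauto.
Qed.

(* Łoś–Marczewski: inner measure on the part inside [C], outer measure
   [1 - inner (~` S)] on the part outside. *)
Definition adjoin_val (Z : set T) : R := inner (Z `&` C) + (1 - inner (~` (Z `\` C))).

Lemma adjoin_valE X Y : D Y ->
  adjoin_val ((X `&` C) `|` (Y `\` C)) = inner (X `&` C) + (w Y - inner (Y `&` C)).
Proof.
move=> DY; rewrite /adjoin_val.
have -> : ((X `&` C) `|` (Y `\` C)) `&` C = X `&` C.
  by apply/seteqP; split=> z; rewrite /setI /setU /setD /=; tauto.
have -> : ((X `&` C) `|` (Y `\` C)) `\` C = Y `\` C.
  by apply/seteqP; split=> z; rewrite /setI /setU /setD /=; tauto.
rewrite inner_setCD //; lra.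
Qed.

Lemma adjoin_val_fa Z : D Z -> adjoin_val Z = w Z.
Proof. by move=> DZ; rewrite -{1}(setUIDK Z C) adjoin_valE // addrC subrK. Qed.

Lemma adjoin_valC : adjoin_val C = inner C.
Proof.
have D0 := set_algebra0 hD.
rewrite -{1}[C]setTI -[_ `&` C]setU0 -(set0D C) adjoin_valE // setTI set0I.
by rewrite (inner_fa hD hw D0) subrr addr0.
Qed.

Lemma adjoin_fa_prob : fa_prob (adjoin D C) adjoin_val.
Proof.
split.
- by rewrite adjoin_val_fa ?(fa_probT hw) //; exact: (set_algebraT hD).
- move=> _ [X [Y [DX DY ->]]]; rewrite adjoin_valE //.
  rewrite addr_ge0 ?(inner_ge0 hD hw) // subr_ge0.
  by apply: (inner_le_fa hD hw) => // z [].
move=> _ _ [X1 [Y1 [DX1 DY1 ->]]] [X2 [Y2 [DX2 DY2 ->]]] Z12.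
have disj z : (X1 `&` C `|` Y1 `\` C) z -> (X2 `&` C `|` Y2 `\` C) z -> False.
  by move=> z1 z2; have : set0 z by rewrite -Z12.
have DX2' : D (X2 `\` X1) by exact: (set_algebraD hD).
have DY2' : D (Y2 `\` Y1) by exact: (set_algebraD hD).
have -> : X2 `&` C `|` Y2 `\` C = (X2 `\` X1) `&` C `|` (Y2 `\` Y1) `\` C.
  apply/seteqP; split=> z; have := disj z;
    by case: (EM (C z)); rewrite /setI /setU /setD /=; tauto.
have -> : (X1 `&` C `|` Y1 `\` C) `|` ((X2 `\` X1) `&` C `|` (Y2 `\` Y1) `\` C) =
    ((X1 `|` (X2 `\` X1)) `&` C) `|` ((Y1 `|` (Y2 `\` Y1)) `\` C).
  by apply/seteqP; split=> z; rewrite /setI /setU /setD /=; tauto.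
have dX : X1 `&` (X2 `\` X1) = set0 by rewrite setDIK.
have dY : Y1 `&` (Y2 `\` Y1) = set0 by rewrite setDIK.
rewrite !adjoin_valE //; last exact: (set_algebraU hD).
rewrite !(inner_add hD hw) // (fa_probU hw) //; lra.
Qed.

End Adjoin.

Definition graph (T R : Type) (D : set (set T)) (w : set T -> R) : set (set T * R) :=
  [set p | D p.1 /\ p.2 = w p.1].

Section Extension.
Variables (T : Type) (R : realType) (Aa B : set (set T)) (w : set T -> R).
Hypotheses (hAa : set_algebra Aa) (hB : set_algebra B) (BAa : B `<=` Aa) (hw : fa_prob B w).

Definition partial_extension (G : set (set T * R)) :=
  graph B w `<=` G /\
  exists D v, [/\ set_algebra D, D `<=` Aa, fa_prob D v & G = graph D v].

(* The union of an empty chain is empty, hence the alternative [G = set0]. *)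
Let P G := G = set0 \/ partial_extension G.

Lemma chain_common (F : set (set (set T * R))) X Y r s :
  F `<=` P -> total_on F subset ->
  (\bigcup_(G in F) G) (X, r) -> (\bigcup_(G in F) G) (Y, s) ->
  exists D v, [/\ set_algebra D, D `<=` Aa, fa_prob D v, graph D v `<=` \bigcup_(G in F) G &
                  [/\ D X, D Y, r = v X & s = v Y]].
Proof.
move=> FP Ftot [G1 FG1 G1X] [G2 FG2 G2Y].
have common G : F G -> G (X, r) -> G (Y, s) -> exists D v,
    [/\ set_algebra D, D `<=` Aa, fa_prob D v, graph D v `<=` \bigcup_(G in F) G &
         [/\ D X, D Y, r = v X & s = v Y]].
  move=> FG GX GY; case: (FP _ FG) => [G0 | [_ [D [v [hD DAa hv GE]]]]].
    by move: GX; rewrite G0.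
  rewrite GE in GX GY; case: GX GY => [DX /= rE] [DY /= sE].
  by exists D, v; split => //; rewrite -GE; exact: bigcup_sup.
have [/(_ _ G1X) G2X | /(_ _ G2Y) G1Y] := Ftot _ _ FG1 FG2.
  exact: (common G2).
exact: (common G1).
Qed.

Lemma chain_union_extension (F : set (set (set T * R))) :
  F `<=` P -> total_on F subset -> (exists2 G0, F G0 & partial_extension G0) ->
  partial_extension (\bigcup_(G in F) G).
Proof.
move=> FP Ftot [G0 FG0 [BG0 _]].
set Un := \bigcup_(G in F) G.
have common := chain_common FP Ftot.
have BUn : graph B w `<=` Un by apply: subset_trans BG0 _; exact: bigcup_sup.
have BT : Un (setT, w setT) by apply: BUn; split => //; exact: (set_algebraT hB).
pose v X := xget 0 [set r | Un (X, r)].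
have vE X r : Un (X, r) -> v X = r.
  move=> UnX; apply: xget_unique => // s UnX'.
  by have [D [u [_ _ _ _ [_ _ -> ->]]]] := common _ _ _ _ UnX' UnX.
split => //; exists [set X | exists r, Un (X, r)], v; split.
- split; first by exists (w setT).
    move=> X [r UnX]; have [D [u [hD _ _ DUn [DX _ _ _]]]] := common _ _ _ _ UnX UnX.
    by exists (u (~` X)); apply: DUn; split => //=; exact: (set_algebraC hD).
  move=> X Y [r UnX] [s UnY]; have [D [u [hD _ _ DUn [DX DY _ _]]]] := common _ _ _ _ UnX UnY.
  by exists (u (X `&` Y)); apply: DUn; split => //=; exact: (set_algebraI hD).
- by move=> X [r UnX]; have [D [u [_ DAa _ _ [/DAa ? _ _ _]]]] := common _ _ _ _ UnX UnX.
- split; first by rewrite (vE _ _ BT) (fa_probT hw).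
    move=> X [r UnX]; have [D [u [_ _ hu _ [DX _ rE _]]]] := common _ _ _ _ UnX UnX.
    by rewrite (vE _ _ UnX) rE; exact: (fa_prob_ge0 hu).
  move=> X Y [r UnX] [s UnY] XY.
  have [D [u [hD _ hu DUn [DX DY rE sE]]]] := common _ _ _ _ UnX UnY.
  have UnXY : Un (X `|` Y, u (X `|` Y)) by apply: DUn; split => //=; exact: (set_algebraU hD).
  by rewrite (vE _ _ UnX) (vE _ _ UnY) (vE _ _ UnXY) rE sE (fa_probU hu).
apply/seteqP; split=> [[X r] UnX | [X r] [[s UnX] /= ->]].
  by split; [exists r | rewrite /= (vE _ _ UnX)].
by rewrite (vE _ _ UnX).
Qed.

Lemma fa_prob_extend : exists v, fa_prob Aa v /\ forall X, B X -> v X = w X.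
Proof.
have BT : graph B w (setT, w setT) by split => //; exact: (set_algebraT hB).
have [G [PG Gmax]] : exists G, P G /\ forall G', G `<` G' -> ~ P G'.
  apply: Zorn_bigcup => F FP Ftot.
  have [ext|noext] := EM (exists2 G0, F G0 & partial_extension G0).
    by right; exact: chain_union_extension.
  left; apply/seteqP; split => // p [G FG Gp].
  by case: (FP _ FG) => [G0|extG]; [rewrite G0 in Gp | case: noext; exists G].
have [BG [D [v [hD DAa hv GE]]]] : partial_extension G.
  case: PG => // G0; exfalso; apply: (Gmax (graph B w)); last by right; split => //; exists B, w.
  by rewrite G0; split => // /(_ _ BT).
have AaD : Aa `<=` D.
  move=> C AaC; case: (EM (D C)) => // nDC; exfalso.
  have GC : G `<=` graph (adjoin D C) (adjoin_val D v C).
    by rewrite GE => -[X r] [DX /= ->]; split; [exact: adjoin_sub | rewrite /= adjoin_val_fa].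
  apply: (Gmax (graph (adjoin D C) (adjoin_val D v C))).
    split => // CG; apply: nDC.
    have /CG : graph (adjoin D C) (adjoin_val D v C) (C, adjoin_val D v C C).
      by split => //; exact: adjoinC.
    by rewrite GE => -[].
  right; split; first exact: subset_trans GC.
  exists (adjoin D C), (adjoin_val D v C); split => //.
  - exact: adjoin_algebra.
  - exact: adjoin_subset.
  - exact: adjoin_fa_prob.
exists v; split; first exact: fa_probS hv.
by move=> X BX; rewrite GE in BG; have [_ /= <-] := BG (X, w X) (conj BX erefl).
Qed.

End Extension.

Lemma fa_prob_extend_inner (T : Type) (R : realType) (Aa B : set (set T))
    (w : set T -> R) (C : set T) :
  set_algebra Aa -> set_algebra B -> B `<=` Aa -> fa_prob B w -> Aa C ->
  exists v, [/\ fa_prob Aa v, forall X, B X -> v X = w X & v C = inner_measure B w C].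
Proof.
move=> hAa hB BAa hw AaC.
have [v [hv vE]] := fa_prob_extend hAa (adjoin_algebra C hB)
  (adjoin_subset hAa BAa AaC) (adjoin_fa_prob C hB hw).
exists v; split => //.
  by move=> X BX; rewrite vE ?adjoin_val_fa //; exact: adjoin_sub.
by rewrite vE ?adjoin_valC //; exact: adjoinC.
Qed.

Lemma determined_sandwich (T : Type) (R : realType) (Aa B : set (set T))
    (w : set T -> R) (C : set T) (c : R) :
  set_algebra Aa -> set_algebra B -> B `<=` Aa -> fa_prob B w -> Aa C ->
  (forall v, fa_prob Aa v -> (forall X, B X -> v X = w X) -> v C = c) ->
  [/\ forall X, B X -> X `<=` C -> w X <= c,
      forall Y, B Y -> C `<=` Y -> c <= w Y &
      forall d, 0 < d -> exists X Y, [/\ B X, B Y, X `<=` C, C `<=` Y & w Y - w X < d]].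
Proof.
move=> hAa hB BAa hw AaC det.
have innerC : inner_measure B w C = c.
  by have [v [hv vB <-]] := fa_prob_extend_inner hAa hB BAa hw AaC; exact: det.
have innerCC : inner_measure B w (~` C) = 1 - c.
  have [v [hv vB <-]] := fa_prob_extend_inner hAa hB BAa hw (set_algebraC hAa AaC).
  by rewrite (fa_probC hAa hv AaC) (det v hv vB).
split.
- by move=> X BX XC; rewrite -innerC; exact: (inner_ub hB hw).
- move=> Y BY CY; have : w (~` Y) <= 1 - c.
    by rewrite -innerCC; apply: (inner_ub hB hw); [exact: (set_algebraC hB) | exact: subsetC].
  by rewrite (fa_probC hB hw BY); lra.
move=> d d_gt0; have d2_gt0 : 0 < d / 2 by rewrite divr_gt0.
have [X [BX XC] ltX] := inner_approx hB hw C d2_gt0.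
have [Y [BY YC] ltY] := inner_approx hB hw (~` C) d2_gt0.
exists X, (~` Y); split => //; first exact: (set_algebraC hB).
  by apply: subsetCr.
by rewrite (fa_probC hB hw BY); rewrite innerC in ltX; rewrite innerCC in ltY; lra.
Qed.

(* [compact_cover] is stated for pointed spaces. *)
HB.instance Definition _ (T : Type) (R : realType) :=
  isPointed.Build {ptws set T -> R} (fun=> 0).

Section Compactness.
Variables (T : Type) (R : realType).

Lemma eval_continuous (X : set T) : continuous (fun w : {ptws set T -> R} => w X).
Proof. exact: (@proj_continuous (set T) (fun _ => R) X). Qed.

Lemma closed_prescribed (I : Type) (S : set I) (f : I -> set T) (g : I -> R) :
  closed [set w : {ptws set T -> R} | forall i, S i -> w (f i) = g i].
Proof.
apply: (@closed_bigI _ _ S (fun i => (fun w : {ptws set T -> R} => w (f i)) @^-1` [set g i])).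
move=> i _; apply: preimage_closed; last exact: closed_eq.
by move=> w _; exact: eval_continuous.
Qed.

Lemma closed_eval_add (X Y Z : set T) :
  closed [set w : {ptws set T -> R} | w Z = w X + w Y].
Proof.
have -> : [set w : {ptws set T -> R} | w Z = w X + w Y] =
    (fun w : {ptws set T -> R} => w Z - (w X + w Y)) @^-1` [set 0].
  by apply/seteqP; split => w /= h; [rewrite h subrr | apply/eqP; rewrite -subr_eq0 h].
apply: preimage_closed; last exact: closed_eq.
move=> w _; apply: (@continuousB _ _ _ (fun w : {ptws set T -> R} => w Z)
    (fun w : {ptws set T -> R} => w X + w Y)).
  exact: eval_continuous.
by apply: (@continuousD _ _ _ (fun w : {ptws set T -> R} => w X)
  (fun w : {ptws set T -> R} => w Y)); exact: eval_continuous.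
Qed.

Lemma closed_fa_prob (D : set (set T)) : closed [set w : {ptws set T -> R} | fa_prob D w].
Proof.
have -> : [set w : {ptws set T -> R} | fa_prob D w] =
    (fun w : {ptws set T -> R} => w setT) @^-1` [set 1] `&`
    [set w | forall X, D X -> 0 <= w X] `&`
    [set w | forall XY, [set XY | [/\ D XY.1, D XY.2 & XY.1 `&` XY.2 = set0]] XY ->
                w (XY.1 `|` XY.2) = w XY.1 + w XY.2].
  apply/seteqP; split => w /=.
    by case=> w1 w0 wU; split => // -[X Y] [] /=; exact: wU.
  case=> -[w1 w0] wU; split => //.
  by move=> X Y DX DY XY; exact: (wU (X, Y)).
apply: closedI; first apply: closedI.
- apply: preimage_closed; last exact: closed_eq.
  by move=> w _; exact: eval_continuous.
- apply: (@closed_bigI _ _ D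
    (fun X => (fun w : {ptws set T -> R} => w X) @^-1` [set x | 0 <= x])).
  move=> X _; apply: preimage_closed; last exact: closed_ge.
  by move=> w _; exact: eval_continuous.
apply: (@closed_bigI _ _ _
  (fun XY => [set w : {ptws set T -> R} | w (XY.1 `|` XY.2) = w XY.1 + w XY.2])).
by move=> XY _; exact: closed_eval_add.
Qed.

Lemma fa_prob_hull_le (D : set (set T)) (w : set T -> R) (S : seq (set T * set T)) XY :
  set_algebra D -> fa_prob D w -> (forall XY, XY \in S -> D XY.1 /\ D XY.2) -> XY \in S ->
  w (\bigcap_(XY in [set` S]) XY.2) - w (\bigcup_(XY in [set` S]) XY.1) <= w XY.2 - w XY.1.
Proof.
move=> hD hw SD SXY; have [DX DY] := SD _ SXY.
apply: lerB; apply: (fa_prob_le hD hw) => //.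
- by apply: set_algebra_bigcap => // XY' /SD[].
- exact: bigcap_inf.
- by apply: set_algebra_bigcup => // XY' /SD[].
- exact: bigcup_sup.
Qed.

Lemma uniform_sandwich (Dd B : set (set T)) (E : set {ptws set T -> R}) (C : set T) (eps : R) :
  set_algebra Dd -> set_algebra B -> B `<=` Dd ->
  (forall w, E w -> fa_prob Dd w) ->
  (forall w w', E w -> (forall X, Dd X -> w' X = w X) -> E w') ->
  closed E ->
  (forall w, E w -> exists X Y, [/\ B X, B Y, X `<=` C, C `<=` Y & w Y - w X < eps]) ->
  exists X Y, [/\ B X, B Y, X `<=` C, C `<=` Y & forall w, E w -> w Y - w X < eps].
Proof.
move=> hDd hB BDd Efa Eext Eclosed Esand.
(* Values outside [Dd] are irrelevant to [E]; zeroing them moves [E] into a cube. *)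
pose trunc (w : set T -> R) X := if `[< Dd X >] then w X else 0.
have truncE w X : Dd X -> trunc w X = w X by move=> DdX; rewrite /trunc asboolT.
pose K : set {ptws set T -> R} := [set w | forall X, `[0, 1]%classic (w X)] `&` E.
have Kcompact : compact K.
  apply: compact_closedI => //; exact: (tychonoff (fun _ => @segment_compact R 0 1)).
have truncK w : E w -> K (trunc w).
  move=> Ew; split; last by apply: (Eext w) => // X /truncE.
  move=> X; rewrite /trunc /= in_itv /=; case: asboolP => DdX; last by rewrite lexx ler01.
  by rewrite (fa_prob_ge0 (Efa w Ew)) // (fa_prob_le1 hDd (Efa w Ew)).
pose sandwiches := [set XY : set T * set T | [/\ B XY.1, B XY.2, XY.1 `<=` C & C `<=` XY.2]].
pose narrow (XY : set T * set T) := [set w : {ptws set T -> R} | w XY.2 - w XY.1 < eps].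
have [S Ssand Scover] : finite_subset_cover sandwiches narrow K.
  rewrite compact_cover in Kcompact; apply: Kcompact.
    move=> XY _; apply: (@open_comp _ _ (fun w : {ptws set T -> R} => w XY.2 - w XY.1)
      [set x | x < eps]); last exact: open_lt.
    move=> w _; apply: (@continuousB _ _ _ (fun w : {ptws set T -> R} => w XY.2)
      (fun w : {ptws set T -> R} => w XY.1)); exact: eval_continuous.
  move=> w [_ Ew]; have [X [Y [BX BY XC CY lt]]] := Esand w Ew.
  by exists (X, Y).
have SB XY : XY \in S -> sandwiches XY by move/Ssand/set_mem.
exists (\bigcup_(XY in [set` S]) XY.1), (\bigcap_(XY in [set` S]) XY.2).
have BX : B (\bigcup_(XY in [set` S]) XY.1) by apply: set_algebra_bigcup => // XY /SB [].
have BY : B (\bigcap_(XY in [set` S]) XY.2) by apply: set_algebra_bigcap => // XY /SB [].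
split => //.
- by move=> z [XY /SB [_ _ XC _] /XC].
- by move=> z Cz XY /SB [_ _ _ CY]; exact: CY.
move=> w Ew; have [XY SXY lt] := Scover _ (truncK w Ew).
have [BX1 BY2 _ _] := SB XY SXY.
rewrite /narrow /= !truncE in lt; try exact: BDd.
apply: le_lt_trans lt; apply: (fa_prob_hull_le hDd (Efa w Ew)) => // XY' /SB[? ? _ _].
by split; exact: BDd.
Qed.

End Compactness.

Section Definability.
Local Open Scope nat_scope.
Variables (F Rl U : Type) (funI : F -> seq U -> U) (relI : Rl -> seq U -> Prop).

Local Notation term := (term F U).
Local Notation formula := (formula F Rl U).
Local Notation teval := (teval F U funI).
Local Notation sat := (sat F Rl U funI relI).
Local Notation term_params_in := (term_params_in F U).
Local Notation params_in := (params_in F Rl U).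
Local Notation definable := (definable funI relI).

Fixpoint term_ind_nested (P : term -> Prop) (Pvar : forall k, P (tvar k))
    (Ppar : forall p, P (tpar p))
    (Papp : forall f ts, foldr (fun t acc => P t /\ acc) True ts -> P (tapp f ts))
    (t : term) : P t :=
  match t with
  | tvar k => Pvar k
  | tpar p => Ppar p
  | tapp f ts => Papp f ts
      ((fix all_P (ts : seq term) : foldr (fun t acc => P t /\ acc) True ts :=
          match ts with
          | [::] => I
          | t0 :: ts' => conj (term_ind_nested Pvar Ppar Papp t0) (all_P ts')
          end) ts)
  end.

Fixpoint term_vbound (t : term) : nat :=
  match t with
  | tvar k => k.+1
  | tpar _ => 0
  | tapp _ ts => foldr (fun t acc => maxn (term_vbound t) acc) 0 ts
  end.

Fixpoint formula_vbound (phi : formula) : nat :=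
  match phi with
  | fatom _ ts => foldr (fun t acc => maxn (term_vbound t) acc) 0 ts
  | feq t1 t2 => maxn (term_vbound t1) (term_vbound t2)
  | fneg f => formula_vbound f
  | fand f g => maxn (formula_vbound f) (formula_vbound g)
  | fex k f => maxn k.+1 (formula_vbound f)
  end.

Lemma eq_teval v v' t : (forall k, k < term_vbound t -> v k = v' k) ->
  teval v t = teval v' t.
Proof.
elim/term_ind_nested: t => [k|p|f ts IH] /= vv'; first exact: vv'.
  by [].
congr (funI f _); elim: ts IH vv' => //= t ts IHts [IHt IH] vv'.
rewrite IHt ?IHts // => k kb; apply: vv'; first by rewrite leq_max kb orbT.
by rewrite leq_max kb.
Qed.

Lemma eq_teval_seq v v' ts :
  (forall k, k < foldr (fun t acc => maxn (term_vbound t) acc) 0 ts -> v k = v' k) ->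
  map (teval v) ts = map (teval v') ts.
Proof.
elim: ts => //= t ts IH vv'; congr (_ :: _).
  by apply: eq_teval => k kb; apply: vv'; rewrite leq_max kb.
by apply: IH => k kb; apply: vv'; rewrite leq_max kb orbT.
Qed.

Lemma eq_sat v v' phi : (forall k, k < formula_vbound phi -> v k = v' k) ->
  sat v phi <-> sat v' phi.
Proof.
elim: phi v v' => /= [r ts|t1 t2|f IH|f IHf g IHg|k f IH] v v' vv'.
- by rewrite (eq_teval_seq vv').
- by rewrite !(@eq_teval v v') // => j jb; apply: vv'; rewrite leq_max jb ?orbT.
- by rewrite (IH v v').
- by rewrite (IHf v v') ?(IHg v v') // => j jb; apply: vv'; rewrite leq_max jb ?orbT.
have upd_eq u : sat (upd U v k u) f <-> sat (upd U v' k u) f.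
  apply: IH => j jb; rewrite /upd; case: eqP => // _.
  by apply: vv'; rewrite leq_max jb orbT.
by split=> -[u]; exists u; apply/upd_eq.
Qed.

Lemma term_params_inS (B B' : set U) t : B `<=` B' ->
  term_params_in B t -> term_params_in B' t.
Proof.
move=> BB'; elim/term_ind_nested: t => [k|p|f ts IH] //=; first exact: BB'.
by elim: ts IH => //= t ts IHts [IHt IH] [Bt Bts]; split; [exact: IHt | exact: IHts].
Qed.

Lemma params_inS (B B' : set U) phi : B `<=` B' -> params_in B phi -> params_in B' phi.
Proof.
move=> BB'; elim: phi => /= [r ts|t1 t2|f IH|f IHf g IHg|k f IH].
- by elim: ts => //= t ts IH [Bt Bts]; split; [exact: term_params_inS BB' Bt | exact: IH].
- by case=> B1 B2; split; exact: term_params_inS BB' _.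
- exact: IH.
- by case=> Bf Bg; split; [exact: IHf | exact: IHg].
- exact: IH.
Qed.

Definition fall (k : nat) (phi : formula) : formula := fneg (fex k (fneg phi)).

Definition falls (ks : seq nat) (phi : formula) : formula := foldr fall phi ks.

Lemma params_falls B ks phi : params_in B (falls ks phi) = params_in B phi.
Proof. by elim: ks. Qed.

Lemma sat_fall v k phi : sat v (fall k phi) <-> forall u, sat (upd U v k u) phi.
Proof.
split=> [nex u | all_u [u]]; last by apply; exact: all_u.
by apply: contrapT => nu; apply: nex; exists u.
Qed.

Lemma sat_falls v ks phi : sat v (falls ks phi) <->
  forall v', (forall j, j \notin ks -> v' j = v j) -> sat v' phi.
Proof.
elim: ks v => [|k ks IH] v.
  split=> [phiv v' v'v | ]; last by apply.
  by have -> : v' = v by apply: funext => j; exact: v'v.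
rewrite [falls _ _]/= sat_fall; split=> [all_u v' v'v | all_v' u].
  apply: (IH _).1 (all_u (v' k)) _ _ => j jks; rewrite /upd.
  case: eqP => [-> // | /eqP jk]; apply: v'v.
  by rewrite in_cons negb_or jk.
apply/IH => v' v'v; apply: all_v' => j; rewrite in_cons negb_or => /andP[jk jks].
by rewrite v'v // /upd (negbTE jk).
Qed.

Definition env_of (u0 : U) (n : nat) (a : 'I_n -> U) : nat -> U :=
  fun k => odflt u0 (omap a (insub k)).

Lemma env_ofE (u0 : U) n (a : 'I_n -> U) (i : 'I_n) : env_of u0 a i = a i.
Proof. by rewrite /env_of valK. Qed.

(* Universally closing the variables [n, n+1, ...] of a defining formula makes
   its truth depend on the first [n] variables only. *)
Lemma definable_env n B S : definable n B S ->
  exists2 phi, params_in B phi & forall v : nat -> U, S (fun i : 'I_n => v i) <-> sat v phi.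
Proof.
move=> [phi [Bphi Sphi]]; set ks := iota n (formula_vbound phi).
exists (falls ks phi); first by rewrite params_falls.
move=> v; rewrite sat_falls Sphi; split=> all_v' v' v'v.
  by apply: all_v' => i; rewrite v'v // mem_iota negb_and -ltnNge ltn_ord.
pose v'' j := if j \in ks then v' j else v j.
have phiv'' : sat v'' phi by apply: all_v' => j /negbTE jks; rewrite /v'' jks.
suff agree k : k < formula_vbound phi -> v'' k = v' k by apply/(eq_sat agree).
move=> kb; rewrite /v''; case: ifP => // /negbT.
rewrite mem_iota negb_and -ltnNge -leqNgt => /orP[kn | ]; first by rewrite -(v'v (Ordinal kn)).
by rewrite leqNgt (leq_trans kb (leq_addl _ _)).
Qed.

Lemma env_definable (u0 : U) n B S phi : params_in B phi ->
  (forall v : nat -> U, S (fun i : 'I_n => v i) <-> sat v phi) -> definable n B S.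
Proof.
move=> Bphi Sphi; exists phi; split => // a; split=> [Sa v va | all_v].
  by apply/Sphi; have -> : (fun i : 'I_n => v i) = a by apply: funext => i; exact: va.
have /Sphi : sat (env_of u0 a) phi by apply: all_v => i; rewrite env_ofE.
by congr S; apply: funext => i; rewrite env_ofE.
Qed.

Lemma definableS n B B' S : B `<=` B' -> definable n B S -> definable n B' S.
Proof. by move=> BB' [phi [Bphi Sphi]]; exists phi; split => //; exact: params_inS Bphi. Qed.

Lemma definableT n B : definable n B setT.
Proof. by exists (feq (tvar 0) (tvar 0)). Qed.

Lemma definableI n B S1 S2 : definable n B S1 -> definable n B S2 -> definable n B (S1 `&` S2).
Proof.
move=> [phi1 [B1 S1phi]] [phi2 [B2 S2phi]]; exists (fand phi1 phi2); split=> // a.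
split=> [[/S1phi S1a /S2phi S2a] v va | all_v]; first by split; [exact: S1a | exact: S2a].
by split; [apply/S1phi | apply/S2phi] => v /all_v [].
Qed.

Lemma definableC (u0 : U) n B S : definable n B S -> definable n B (~` S).
Proof.
move=> /definable_env[phi Bphi Sphi]; apply: (env_definable u0 (phi := fneg phi)) => // v.
by split=> nS /Sphi.
Qed.

Lemma definable_cylx (u0 : U) n m B S : definable n B S -> definable (n + m) B (cylx n m S).
Proof. by move=> /definable_env[phi Bphi Sphi]; exact: (env_definable u0 Bphi). Qed.

End Definability.

Section DefinableAlgebras.
Variables (F Rl U : Type) (funI : F -> seq U -> U) (relI : Rl -> seq U -> Prop) (u0 : U).

Lemma definable_set_algebra n B : set_algebra (definable funI relI n B).
Proof. by split=> [|S|S1 S2]; [exact: definableT | exact: definableC | exact: definableI]. Qed.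

Lemma Bxy_definable n m A : Bxy funI relI n m A `<=` definable funI relI (n + m) setT.
Proof.
move=> X; elim => [D /(definable_cylx u0 m)|D /definableS|D _ /(definableC u0)|D1 D2 _ + _].
- by [].
- by apply.
- by [].
- exact: definableI.
Qed.

Lemma Bxy_set_algebra n m A : set_algebra (Bxy funI relI n m A).
Proof.
split=> [|X|X Y]; [ | exact: Bxy_compl | exact: Bxy_and].
by apply: (@Bxy_cyl _ _ _ funI relI n m A setT); exact: definableT.
Qed.

End DefinableAlgebras.

Section ExtensionSpace.
Variables (F Rl U : Type) (funI : F -> seq U -> U) (relI : Rl -> seq U -> Prop) (u0 : U).
Variables (R : realType) (n m : nat) (A : set U).
Variables (lam : set ('I_(n + m) -> U) -> R) (mu : set ('I_n -> U) -> R).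

Local Notation Dxy := (definable funI relI (n + m) setT).
Local Notation Bs := (Bxy funI relI n m A).
Local Notation E := (Eset funI relI n m A lam mu).

Lemma Eset_fa_prob om : E om -> fa_prob Dxy om.
Proof. by case=> -[om1 [om0 omU]] _; split. Qed.

Lemma Eset_agree om w : E om -> fa_prob Dxy w -> (forall X, Bs X -> w X = om X) -> E w.
Proof.
move=> [_ [omA omx]] [w1 w0 wU] wom; split; first by split=> //; split.
split=> D Ddef; rewrite wom; [exact: omA | exact: Bxy_A | exact: omx | exact: Bxy_cyl].
Qed.

Lemma Eset_eq_on om w : E om -> (forall X, Dxy X -> w X = om X) -> E w.
Proof.
move=> Eom wom; apply: (Eset_agree Eom).
  exact: (eq_fa_prob (definable_set_algebra funI relI u0 _ _) (Eset_fa_prob Eom)).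
by move=> X /(Bxy_definable u0); exact: wom.
Qed.

Lemma Eset_closed : closed (E : set {ptws set ('I_(n + m) -> U) -> R}).
Proof.
have -> : E = [set w : {ptws set ('I_(n + m) -> U) -> R} | fa_prob Dxy w] `&`
    [set w | forall D, definable funI relI (n + m) A D -> w (id D) = lam D] `&`
    [set w | forall D, definable funI relI n setT D -> w (cylx n m D) = mu D].
  apply/seteqP; split=> w; last by case=> -[[w1 w0 wU] wA] wx; split; first by split.
  move=> Ew; case: (Ew) => _ [wA wx].
  by split; [split; [exact: Eset_fa_prob | exact: wA] | exact: wx].
by apply: closedI; [apply: closedI; [exact: closed_fa_prob|] | ]; exact: closed_prescribed.
Qed.

Variables (nu : set ('I_m -> U) -> R) (psi : set ('I_m -> U)).
Hypothesis nu_E : forall om, E om ->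
  forall D, definable funI relI m setT D -> om (cyly n m D) = nu D.
Hypothesis psi_def : definable funI relI m setT psi.

Local Notation C := (cyly n m psi).

(* [C] is adjoined to [Dxy] rather than shown to lie in it, which would need a
   renaming of variables. *)
Lemma Eset_sandwich om : E om ->
  [/\ forall X, Bs X -> X `<=` C -> om X <= nu psi,
      forall Y, Bs Y -> C `<=` Y -> nu psi <= om Y &
      forall d, 0 < d -> exists X Y, [/\ Bs X, Bs Y, X `<=` C, C `<=` Y & om Y - om X < d]].
Proof.
move=> Eom; have hD := definable_set_algebra funI relI u0 (n + m) setT.
have BD := @Bxy_definable _ _ _ funI relI u0 n m A.
apply: (determined_sandwich (Aa := adjoin Dxy C)).
- exact: adjoin_algebra.
- exact: Bxy_set_algebra.
- exact: subset_trans BD (adjoin_sub _).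
- exact: fa_probS BD (Eset_fa_prob Eom).
- exact: adjoinC.
move=> v hv vom; apply: nu_E psi_def; apply: (Eset_agree Eom) vom.
exact: fa_probS (adjoin_sub _) hv.
Qed.

Lemma Eset_uniform_sandwich eps : 0 < eps ->
  exists X Y, [/\ Bs X, Bs Y, X `<=` C, C `<=` Y & forall om, E om -> om Y - om X < eps].
Proof.
move=> eps_gt0; apply: (uniform_sandwich (Dd := Dxy)).
- exact: definable_set_algebra.
- exact: Bxy_set_algebra.
- exact: Bxy_definable.
- exact: Eset_fa_prob.
- by move=> om w Eom; exact: Eset_eq_on.
- exact: Eset_closed.
by move=> om /Eset_sandwich[_ _]; apply.
Qed.

End ExtensionSpace.

Theorem theorem3p18 (F Rl U : Type) (funI : F -> seq U -> U)
  (relI : Rl -> seq U -> Prop) (K : Type) (R : realType) (n m : nat)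
  (A : set U)
  (mu : set ('I_n -> U) -> R) (nu : set ('I_m -> U) -> R)
  (lam : set ('I_(n + m) -> U) -> R) :
  monster funI relI K ->
  card_lt_type A K ->
  keisler funI relI n setT mu ->
  keisler funI relI m setT nu ->
  keisler funI relI (n + m) A lam ->
  witnesses funI relI n m A lam mu nu ->
  forall psi : set ('I_m -> U), definable funI relI m setT psi ->
  forall eps : R, 0 < eps ->
  exists chim chip : set ('I_(n + m) -> U),
    Bxy funI relI n m A chim /\ Bxy funI relI n m A chip /\
    (chim `<=` cyly n m psi /\ cyly n m psi `<=` chip) /\
    (forall om, Eset funI relI n m A lam mu om -> om chip - om chim < eps) /\
    (forall om, Eset funI relI n m A lam mu om ->
       `|om chip - nu psi| < eps /\ `|om chim - nu psi| < eps).
Proof.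
move=> [[u0] _] _ _ _ _ [_ nu_E] psi psi_def eps eps_gt0.
have [chim [chip [Bm Bp mC Cp width]]] := Eset_uniform_sandwich u0 nu_E psi_def eps_gt0.
exists chim, chip; do 3!split => //; split => // om Eom.
have [lo hi _] := Eset_sandwich u0 nu_E psi_def Eom.
have := width om Eom; have := lo _ Bm mC; have := hi _ Bp Cp.
by rewrite !ltr_distlC => *; split; apply/andP; split; lra.
Qed.
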